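(* Let $a, b \in \mathbb Z_g$ and let $1 \leq i < j \leq k$. If $\vec \theta \in \Lambda$, then \[ \theta_{\{i, j\}, a} + \theta_{\{i, j\}, b} \equiv \theta_{\{i, j\}, a + b} \pmod{2 \pi}, \] where the undefined value $\theta_{\{i,j\},0}$ is understood to be $0$.
   Context: Let $g\ge 2$, $k\ge 2$ be integers, $\mathbb Z_g$ the integers mod $g$, and $d=\binom{k}{2}(g-1)$. Index the coordinates of $\mathbb R^d$ by pairs $(\{i,j\},a)$ with $1\le i<j\le k$ and $a\in\mathbb Z_g\setminus\{0\}$. Define $Z:(\mathbb Z_g)^k\to\mathbb R^d$ by $[Z(\vec x)]_{\{i,j\},a}=1-1/g$ if $x_i-x_j=a$ and $-1/g$ otherwise. Define $\Phi:\mathbb R^d\to\mathbb C$ by $\Phi(\vec\theta)=\sum_{\vec x\in(\mathbb Z_g)^k} g^{-k}e^{i\vec\theta\cdot Z(\vec x)}$, and $\Lambda=\{\vec\theta\in\mathbb R^d: |\Phi(\vec\theta)|=1\}$. *)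

From mathcomp Require Import all_boot all_algebra.
From mathcomp Require Import reals trigo.
From mathcomp Require Export complex.
Set Implicit Arguments. Unset Strict Implicit. Unset Printing Implicit Defensive.
Import GRing.Theory Num.Theory ComplexField.
Local Open Scope ring_scope. Local Open Scope complex_scope.

(* Coordinate index set of R^d, d = binom(k,2)(g-1): pairs ({i,j}, a) with
   i < j in 'I_k (0-based, i.e. 1 <= i+1 < j+1 <= k) and a in Z_g \ {0}. *)
Definition coordZ (g k : nat) : predArgType :=
  {p : 'I_k * 'I_k * 'Z_g | (p.1.1 < p.1.2)%N && (p.2 != 0)}.

Definition Zvec (R : realType) (g k : nat) (x : 'I_k -> 'Z_g) (c : coordZ g k) : R :=
  let: (i, j, a) := val c in
  (if x i - x j == a then 1 else 0) - (g%:R)^-1.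

Definition cexp (R : realType) (t : R) : R[i] := (cos t +i* sin t)%C.

Definition Phi (R : realType) (g k : nat) (theta : coordZ g k -> R) : R[i] :=
  \sum_(x : {ffun 'I_k -> 'Z_g})
     ((g ^ k)%:R)^-1%:C * cexp (\sum_(c : coordZ g k) theta c * @Zvec R g k x c).

Definition Lambda (R : realType) (g k : nat) : pred (coordZ g k -> R) :=
  fun theta => `|Phi theta| == 1.

(* theta_{{i,j},a} with the convention theta_{{i,j},0} = 0 (needs i < j). *)
Definition theta_at (R : realType) (g k : nat) (theta : coordZ g k -> R)
    (i j : 'I_k) (a : 'Z_g) : R :=
  match boolP ((i < j)%N && (a != 0)) with
  | AltTrue h => theta (exist _ (i, j, a) h)
  | AltFalse _ => 0
  end.

Definition cong2pi (R : realType) (x y : R) : Prop :=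
  exists n : int, x - y = n%:~R * (2 * pi).

From mathcomp Require Import all_boot all_algebra.
From mathcomp Require Import reals trigo complex.
From mathcomp Require Import order ring lra zify.
Import Order.TTheory GRing.Theory Num.Theory ComplexField.
Set Implicit Arguments. Unset Strict Implicit. Unset Printing Implicit Defensive.
Local Open Scope ring_scope.

(* Phi(theta) is the mean of the g^k unit complex numbers e^{i theta.Z(x)}, so
   |Phi(theta)| = 1 forces equality in the triangle inequality: all phases
   theta.Z(x) agree modulo 2 pi.  Put x_i = a, x_j = -b and compare the four
   points (a, -b), (a, 0), (0, -b), (0, 0) in the coordinates i, j (all other
   coordinates 0).  In the alternating sum of their phases every coordinate
   {p, q} other than {i, j} cancels, because x_p - x_q then sees at most one of
   the two perturbations, while the {i, j} coordinates leave
   theta_{a+b} - theta_a - theta_b. *)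

Section Trigonometry.
Variable R : realType.

Lemma cosDz (t : R) (n : int) : cos (t + n%:~R * (2 * pi)) = cos t.
Proof.
have cosDn (u : R) (m : nat) : cos (u + m%:R * (2 * pi)) = cos u.
  by rewrite mulr_natl mulr_natl periodicn //; exact: cosD2pi.
case: n => m; first exact: cosDn.
by rewrite -cosN opprD -mulNr -intrN NegzE opprK cosDn cosN.
Qed.

Lemma cos_eq1 (t : R) : cos t = 1 -> exists n : int, t = n%:~R * (2 * pi).
Proof.
move=> cost1; have pi2_gt0 : 0 < 2 * pi :> R by rewrite mulr_gt0 ?pi_gt0.
pose n := Num.floor ((t + pi) / (2 * pi)); exists n.
have /andP[nle ltn1] := floor_itv ((t + pi) / (2 * pi)).
rewrite -/n ler_pdivlMr // ltr_pdivrMr // intrD mulrDl mul1r in nle ltn1.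
pose y := t - n%:~R * (2 * pi).
have y_pi : `|y| \in `[0, pi].
  by rewrite in_itv /= normr_ge0 ler_norml /y; apply/andP; split; lra.
have zero_pi : (0 : R) \in `[0, pi] by rewrite in_itv /= lexx pi_ge0.
have cosy1 : cos `|y| = cos 0 by rewrite cos_norm cos0 -cost1 -(cosDz y n) subrK.
have normy0 : `|y| = 0 := cos_inj y_pi zero_pi cosy1.
by apply/eqP; rewrite -subr_eq0 -normr_eq0 normy0.
Qed.

Lemma cexp_eq_cong2pi (s t : R) : cexp s = cexp t -> cong2pi s t.
Proof.
move=> [cos_st sin_st]; apply: cos_eq1.
by rewrite cosB cos_st sin_st -!expr2 cos2Dsin2.
Qed.

Lemma norm_cexp (t : R) : `|cexp t| = 1.
Proof. by rewrite normc_def /= cos2Dsin2 sqrtr1. Qed.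

End Trigonometry.

Lemma mean_norm_eq1_const (C : numClosedFieldType) (T : finType) (u : T -> C) :
  (forall x, `|u x| = 1) -> `|#|T|%:R^-1 * \sum_x u x| = 1 ->
  forall x y, u x = u y.
Proof.
move=> norm_u1 mean1 x y.
have sum_norm : \sum_x `|u x| = #|T|%:R.
  by rewrite (eq_bigr _ (fun x _ => norm_u1 x)) sumr_const.
have T_neq0 : #|T|%:R != 0 :> C.
  move: mean1; apply: contraPneq => ->.
  by rewrite invr0 mul0r normr0 => /esym/eqP; rewrite oner_eq0.
have norm_sum : `|\sum_x u x| = \sum_x `|u x|.
  move: mean1; rewrite sum_norm normrM normfV normr_nat.
  by move=> /(canRL (mulVKf T_neq0)); rewrite mulr1.
have [t _ u_t] := normC_sum_eq1 norm_sum (fun x _ => norm_u1 x).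
by rewrite !u_t.
Qed.

Lemma indicator_second_difference (R : pzRingType) (Z : zmodType) (e s t : Z) :
  s = 0 \/ t = 0 ->
  (if s + t == e then 1 else 0) - (if s == e then 1 else 0)
    - ((if t == e then 1 else 0) - (if 0 == e then 1 else 0)) = 0 :> R.
Proof. by case=> ->; rewrite ?add0r ?addr0 subrr ?subr0 ?subrr. Qed.

Lemma ordered_pair_eq (p q i j : nat) : (p < q)%N -> (i < j)%N ->
  ~~ ((p != i) && (q != i)) -> ~~ ((p != j) && (q != j)) -> (p == i) && (q == j).
Proof. lia. Qed.

Section Lambda.
Variables (R : realType) (g k : nat) (theta : coordZ g k -> R).

Definition phase (x : 'I_k -> 'Z_g) : R := \sum_c theta c * Zvec R x c.

Definition delta (i : 'I_k) (a : 'Z_g) : {ffun 'I_k -> 'Z_g} :=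
  [ffun m => if m == i then a else 0].

Lemma PhiE : (1 < g)%N ->
  Phi theta = #|{ffun 'I_k -> 'Z_g}|%:R^-1
              * \sum_(x : {ffun 'I_k -> 'Z_g}) cexp (phase x).
Proof.
move=> g_gt1; have -> : #|{ffun 'I_k -> 'Z_g}| = (g ^ k)%N.
  by rewrite card_ffun !card_ord Zp_cast.
rewrite /Phi mulr_sumr.
by apply: eq_bigr => x _; rewrite fmorphV rmorph_nat.
Qed.

Lemma Lambda_phase_cong : (1 < g)%N -> theta \in @Lambda R g k ->
  forall x y : {ffun 'I_k -> 'Z_g}, cong2pi (phase x) (phase y).
Proof.
rewrite unfold_in /Lambda => g_gt1; rewrite PhiE // => /eqP mean1 x y.
exact/cexp_eq_cong2pi/(mean_norm_eq1_const (fun _ => norm_cexp _) mean1).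
Qed.

Lemma Zvec_second_difference (i j : 'I_k) (a b : 'Z_g) (c : coordZ g k) :
  (i < j)%N ->
  Zvec R (delta i a + delta j (- b)) c - Zvec R (delta i a) c
    - (Zvec R (delta j (- b)) c - Zvec R (0 : {ffun 'I_k -> 'Z_g}) c)
  = (val c == (i, j, a + b))%:R - (val c == (i, j, a))%:R - (val c == (i, j, b))%:R.
Proof.
move=> ij; case: c => [[[p q] e] /= pq_e]; have /andP[pq e0] := pq_e.
have drop_const (A B C D : R) :
  (A - g%:R^-1) - (B - g%:R^-1) - ((C - g%:R^-1) - (D - g%:R^-1)) = A - B - (C - D).
  by ring.
rewrite /Zvec /= drop_const !ffunE !xpair_eqE subr0 /=.
have [/andP[/eqP pi /eqP qj] | off] := boolP ((p == i) && (q == j)).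
  have [ji ij'] : (j == i) = false /\ (i == j) = false.
    by split; [exact: gtn_eqF | exact: ltn_eqF].
  rewrite pi qj ji ij' !eqxx /=.
  rewrite addr0 sub0r opprK add0r (eq_sym 0) (negbTE e0) !subr0 ![e == _]eq_sym.
  by case: (a + b == e); case: (a == e); case: (b == e).
rewrite /= !mulr0n !subr0 opprD addrACA.
apply: indicator_second_difference.
have [/andP[/negbTE pi /negbTE qi] | i_in] := boolP ((p != i) && (q != i)).
  by left; rewrite pi qi subrr.
have [/andP[/negbTE pj /negbTE qj] | j_in] := boolP ((p != j) && (q != j)).
  by right; rewrite pj qj subrr.
by move: off; rewrite ordered_pair_eq.
Qed.

Lemma theta_atE (i j : 'I_k) (a : 'Z_g) :
  theta_at theta i j a = \sum_c theta c * (val c == (i, j, a))%:R.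
Proof.
rewrite /theta_at; destruct (boolP ((i < j)%N && (a != 0))) as [ija | not_ija].
  rewrite (bigD1 (exist _ (i, j, a) ija)) //= eqxx mulr1 big1 ?addr0 // => c.
  apply: contraNeq; rewrite mulf_eq0 pnatr_eq0 eqb0 negb_or negbK.
  by move=> /andP[_ /eqP vc]; apply/eqP/val_inj.
rewrite big1 // => c _; case: (eqVneq (val c) (i, j, a)) => [vc | _]; last by rewrite mulr0.
by move: (valP c) not_ija; rewrite vc => ->.
Qed.

Lemma phase_second_difference (i j : 'I_k) (a b : 'Z_g) : (i < j)%N ->
  phase (delta i a + delta j (- b)) - phase (delta i a)
    - (phase (delta j (- b)) - phase (0 : {ffun 'I_k -> 'Z_g}))
  = theta_at theta i j (a + b) - theta_at theta i j a - theta_at theta i j b.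
Proof.
move=> ij; rewrite !theta_atE /phase -!sumrB; apply: eq_bigr => c _.
by rewrite -!mulrBr Zvec_second_difference.
Qed.

End Lambda.

Theorem corollary2p3 (R : realType) (g k : nat) (hg : (2 <= g)%N) (hk : (2 <= k)%N)
    (a b : 'Z_g) (i j : 'I_k) (hij : (i < j)%N) (theta : coordZ g k -> R) :
  theta \in @Lambda R g k ->
  cong2pi (theta_at theta i j a + theta_at theta i j b) (theta_at theta i j (a + b)).
Proof.
move=> theta_in.
have [m1 cong1] := Lambda_phase_cong hg theta_in (delta i a + delta j (- b)) (delta i a).
have [m2 cong2] := Lambda_phase_cong hg theta_in (delta j (- b)) 0.
have := phase_second_difference theta a b hij; rewrite cong1 cong2 => second_diff.
exists (m2 - m1); rewrite intrD intrN mulrDl mulNr -[RHS]opprB second_diff.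
ring.
Qed.
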